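(* Let $k$ be an algebraically closed field of characteristic zero, $A=k[x,y]$, $\mathfrak m=(x,y)$. Let $M$ be an $A$-module of length $4$ supported at $\mathfrak m$ with $\dim_k M/\mathfrak m M=3$. Then either $M\cong k\oplus (A/\mathfrak m^2)^\ast$, or $M\cong k^2\oplus\mathscr O_Z$, where $k=A/\mathfrak m$ and $\mathscr O_Z=A/I$ is the structure sheaf of a length-$2$ subscheme $Z\subset\mathbb A^2$ supported at the origin.
   Context: $(A/\mathfrak m^2)^\ast=\operatorname{Hom}_k(A/\mathfrak m^2,k)$ with $A$-action $(a\cdot\varphi)(m)=\varphi(am)$. *)

From HB Require Import structures.
From mathcomp Require Import all_boot all_order all_algebra.
Set Implicit Arguments. Unset Strict Implicit. Unset Printing Implicit Defensive.
Import Order.TTheory GRing.Theory Num.Theory.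
Local Open Scope ring_scope.

(* A module over A = k[x,y] whose underlying k-space is finite dimensional:
   the space of row vectors 'rV[k]_n, with x and y acting (on the right)
   by two commuting matrices: x.v = v *m actX, y.v = v *m actY. *)
Record kxy_mod (k : fieldType) := KxyMod {
  mdim : nat;
  actX : 'M[k]_mdim;
  actY : 'M[k]_mdim;
  act_comm : actX *m actY = actY *m actX }.

Section Defs.
Variable k : fieldType.

Definition is_submod (M : kxy_mod k) (U : 'M[k]_(mdim M)) : bool :=
  (U *m actX M <= U)%MS && (U *m actY M <= U)%MS.

Definition has_length (M : kxy_mod k) (l : nat) : Prop :=
  exists U : nat -> 'M[k]_(mdim M),
    U 0%N = 0 /\ (U l == (1%:M : 'M[k]_(mdim M)))%MS /\
    (forall i, (i <= l)%N -> is_submod (U i)) /\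
    (forall i, (i < l)%N ->
       (U i < U i.+1)%MS /\
       forall W : 'M[k]_(mdim M), is_submod W ->
          (U i <= W)%MS -> (W <= U i.+1)%MS ->
          (W == U i)%MS || (W == U i.+1)%MS).

(* Supported at m = (x,y): m^N M = 0 for some N, i.e. every monomial
   x^i y^(N-i) of degree N acts as zero. *)
Definition supported_at_m (M : kxy_mod k) : Prop :=
  exists N : nat, forall i, (i <= N)%N ->
    actX M ^+ i *m actY M ^+ (N - i) = 0.

(* dim_k M/mM, where mM = xM + yM *)
Definition top_dim (M : kxy_mod k) : nat :=
  (mdim M - \rank (actX M + actY M)%MS)%N.

Definition mod_iso (M N : kxy_mod k) : Prop :=
  exists P : 'M[k]_(mdim M, mdim N),
    [/\ row_free P, row_full P,
        actX M *m P = P *m actX N & actY M *m P = P *m actY N].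

Definition cyclic_mod (M : kxy_mod k) : Prop :=
  exists v : 'rV[k]_(mdim M), forall W : 'M[k]_(mdim M),
    is_submod W -> (v <= W)%MS -> ((1%:M : 'M[k]_(mdim M)) <= W)%MS.

Lemma dsum_comm (M N : kxy_mod k) :
  block_mx (actX M) 0 0 (actX N) *m block_mx (actY M) 0 0 (actY N)
  = block_mx (actY M) 0 0 (actY N) *m block_mx (actX M) 0 0 (actX N).
Proof.
by rewrite !mulmx_block !mulmx0 !mul0mx !addr0 !add0r !act_comm.
Qed.

Definition dsum (M N : kxy_mod k) : kxy_mod k :=
  @KxyMod k (mdim M + mdim N)%N _ _ (dsum_comm M N).

Lemma dual_comm (M : kxy_mod k) :
  (actX M)^T *m (actY M)^T = (actY M)^T *m (actX M)^T.
Proof. by rewrite -!trmx_mul act_comm. Qed.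

(* the dual Hom_k(M,k) with (a.phi)(m) = phi(a m): representing phi by the
   column vector c with phi(v) = v *m c, we get a.phi = (X *m c), i.e. as a
   row vector c^T *m X^T. *)
Definition dual_mod (M : kxy_mod k) : kxy_mod k :=
  @KxyMod k (mdim M) _ _ (dual_comm M).

Lemma zero_comm : (0 : 'M[k]_1) *m (0 : 'M[k]_1) = (0 : 'M[k]_1) *m (0 : 'M[k]_1).
Proof. by []. Qed.

Definition k_mod : kxy_mod k := @KxyMod k 1 0 0 zero_comm.

Definition m2X : 'M[k]_3 := delta_mx (inord 0) (inord 1).
Definition m2Y : 'M[k]_3 := delta_mx (inord 0) (inord 2).

Lemma m2_comm : m2X *m m2Y = m2Y *m m2X.
Proof.
rewrite /m2X /m2Y !mul_delta_mx_cond.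
have -> : ((inord 1 : 'I_3) == inord 0) = false.
  by apply/negbTE; apply/eqP => /(congr1 val); rewrite /= !inordK.
have -> : ((inord 2 : 'I_3) == inord 0) = false.
  by apply/negbTE; apply/eqP => /(congr1 val); rewrite /= !inordK.
by [].
Qed.

(* A/m^2 in the basis (1, x, y): x.1 = x, y.1 = y, all other products 0 *)
Definition Am2_mod : kxy_mod k := @KxyMod k 3 m2X m2Y m2_comm.

End Defs.

(** Length four forces dim M = 4, because every simple subquotient of a module
    supported at m is k.  Since dim M/mM = 3, the submodule mM is a line <w>,
    and nilpotency of x and y gives x w = y w = 0.  So v |-> (x v, y v) maps M
    into <w>^2 with the socle as kernel, and its rank is 1 or 2.

    Rank 2: choose v1, v2 with (x v1, y v1) = (w, 0) and (x v2, y v2) = (0, w),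
    and u0 completing w to a basis of the socle; then (w, v1, v2) spans a copy
    of (A/m^2)^* and u0 a copy of k.

    Rank 1: choose u outside the socle, so x u = a w and y u = b w with
    (a, b) <> 0; then (w, u) spans O_Z for Z = V(m^2, b x - a y), and the
    three-dimensional socle supplies two more copies of k. *)

From HB Require Import structures.
From mathcomp Require Import all_boot all_order all_algebra.
From mathcomp Require Import zify.
Import Order.TTheory GRing.Theory Num.Theory.
Local Open Scope ring_scope.
Set Implicit Arguments. Unset Strict Implicit.

Section LinearAlgebra.
Variable k : fieldType.

Lemma row_notin_of_mxrank_lt n m1 m2 (K : 'M[k]_(m1, n)) (B : 'M[k]_(m2, n)) :
  (\rank B < \rank K)%N -> exists2 u : 'rV_n, (u <= K)%MS & ~~ (u <= B)%MS.
Proof.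
move=> ltBK; have : ~~ (K <= B)%MS.
  by apply: contraL ltBK => /mxrankS; rewrite leqNgt.
by case/row_subPn => i notinB; exists (row i K); first exact: row_sub.
Qed.

Lemma mxrank_adds_notin n m (u : 'rV[k]_n) (B : 'M[k]_(m, n)) :
  ~~ (u <= B)%MS -> \rank (u + B)%MS = (\rank B).+1.
Proof.
move=> uB; have ltB : (B < u + B)%MS.
  by rewrite ltmxE addsmxSr addsmx_sub negb_and uB.
have := (mxrank_adds_leqif u B).1; rewrite ltmxErank in ltB.
case/andP: ltB => _; have := rank_leq_row u; lia.
Qed.

Lemma mxrank_adds_kermx n p m1 m2 (K : 'M[k]_(m1, n)) (A : 'M[k]_(m2, n))
    (R : 'M[k]_(n, p)) :
  (K <= kermx R)%MS -> (\rank K + \rank (A *m R) <= \rank (K + A)%MS)%N.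
Proof.
move=> /sub_kermxP KR0; rewrite -(mxrank_mul_ker (K + A)%MS R) addnC leq_add //.
  by rewrite addsmxMr KR0 adds0mx.
by apply: mxrankS; rewrite sub_capmx addsmxSl; apply/sub_kermxP.
Qed.

Lemma col_mx_eqmx_adds n m1 m2 m3 m4 (A : 'M[k]_(m1, n)) (B : 'M[k]_(m2, n))
    (C : 'M[k]_(m3, n)) (D : 'M[k]_(m4, n)) :
  (A :=: C)%MS -> (B :=: D)%MS -> (col_mx A B :=: C + D)%MS.
Proof.
by move=> eqAC eqBD; apply: eqmx_trans (eqmx_sym (addsmxE A B)) (adds_eqmx eqAC eqBD).
Qed.

Lemma no_submx_between n m1 m2 m3 (U : 'M[k]_(m1, n)) (W : 'M[k]_(m2, n))
    (V : 'M[k]_(m3, n)) :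
  (U <= W)%MS -> (W <= V)%MS -> (\rank V <= (\rank U).+1)%N ->
  (W == U)%MS || (W == V)%MS.
Proof.
move=> UW WV rV; have [eqUW eqWV] := (mxrank_leqif_eq UW, mxrank_leqif_eq WV).
have [rUW | rUW] := eqVneq (\rank U) (\rank W).
  by move: eqUW.2; rewrite rUW eqxx => /esym/andP[-> ->].
have : \rank W == \rank V by have := eqUW.1; have := eqWV.1; lia.
by rewrite eqWV.2 => ->; rewrite orbT.
Qed.

Lemma nilpotent_stable_rV_eq0 n (w : 'rV[k]_n) (Z : 'M[k]_n) N :
  Z ^+ N = 0 -> (w *m Z <= w)%MS -> w *m Z = 0.
Proof.
move=> ZN0 /sub_rVP[c wZ].
have wZn j : w *m Z ^+ j = c ^+ j *: w.
  elim: j => [|j IHj]; first by rewrite expr0 mulmx1 scale1r.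
  by rewrite exprSr -mulmxE mulmxA IHj -scalemxAl wZ scalerA -exprSr.
have /eqP := wZn N; rewrite ZN0 mulmx0 eq_sym scalemx_eq0 expf_eq0.
by case/orP=> [/andP[_ /eqP c0] | /eqP w0]; rewrite wZ ?c0 ?w0 ?scale0r ?scaler0.
Qed.

End LinearAlgebra.

Section Length.
Variables (k : fieldType) (M : kxy_mod k).
Local Notation X := (actX M).
Local Notation Y := (actY M).
Local Notation n := (mdim M).

Lemma supported_nilpotent :
  supported_at_m M -> exists N, X ^+ N = 0 /\ Y ^+ N = 0.
Proof.
case=> N monoN0; exists N; split.
  by have := monoN0 N (leqnn N); rewrite subnn expr0 mulmx1.
by have := monoN0 0%N (leq0n N); rewrite subn0 expr0 mul1mx.
Qed.

Lemma socle_row_quotient (U V : 'M[k]_n) :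
  supported_at_m M -> is_submod U -> is_submod V -> ~~ (V <= U)%MS ->
  exists2 u : 'rV_n, (u <= V)%MS &
    [&& ~~ (u <= U)%MS, (u *m X <= U)%MS & (u *m Y <= U)%MS].
Proof.
case=> N monoN0 subU /andP[VX VY] /row_subPn[i0 notinU].
have commYX : GRing.comm Y X by rewrite /GRing.comm -!mulmxE act_comm.
suff: forall d (v : 'rV_n), (v <= V)%MS -> ~~ (v <= U)%MS ->
    (forall i, (i <= d)%N -> v *m (X ^+ i *m Y ^+ (d - i)) = 0) ->
  exists2 u : 'rV_n, (u <= V)%MS &
    [&& ~~ (u <= U)%MS, (u *m X <= U)%MS & (u *m Y <= U)%MS].
  by apply; [exact: row_sub | exact: notinU | move=> i /monoN0 ->; rewrite mulmx0].
elim=> [|d IHd] v vV vU vmono0.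
  have := vmono0 0%N (leqnn 0); rewrite !expr0 !mulmx1 => v0.
  by rewrite v0 sub0mx in vU.
have [vXU | vXU] := boolP (v *m X <= U)%MS; last first.
  apply: (IHd (v *m X)) vXU _ => [|i le_id].
    exact: submx_trans (submxMr X vV) VX.
  rewrite -mulmxA mulmxE mulrA -exprS -mulmxE.
  by rewrite -[(d - i)%N]/(d.+1 - i.+1)%N vmono0.
have [vYU | vYU] := boolP (v *m Y <= U)%MS; first by exists v; rewrite ?vU ?vXU ?vYU.
apply: (IHd (v *m Y)) vYU _ => [|i le_id].
  exact: submx_trans (submxMr Y vV) VY.
rewrite -mulmxA mulmxE mulrA (commrX i commYX) -mulrA -exprS -mulmxE.
by rewrite -subSn // vmono0 // leqW.
Qed.

Lemma simple_quotient_mxrank (U V : 'M[k]_n) :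
  supported_at_m M -> is_submod U -> is_submod V -> (U < V)%MS ->
  (forall W : 'M[k]_n, is_submod W -> (U <= W)%MS -> (W <= V)%MS ->
     (W == U)%MS || (W == V)%MS) ->
  \rank V = (\rank U).+1.
Proof.
move=> supp subU subV ltUV simpleVU.
have /andP[UV notVU] := ltUV; rewrite ltmxE in ltUV.
have [u uV /and3P[notinU uXU uYU]] := socle_row_quotient supp subU subV notVU.
have subW : is_submod (u + U)%MS.
  case/andP: subU => UX UY.
  by rewrite /is_submod !addsmxMr !addsmx_sub !(submx_trans _ (addsmxSr u U)).
have WV : (u + U <= V)%MS by rewrite addsmx_sub uV UV.
case/orP: (simpleVU _ subW (addsmxSr u U) WV) => [/eqmxP eqWU | /eqmx_rank <-].
  by move: (addsmxSl u U); rewrite eqWU (negbTE notinU).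
exact: mxrank_adds_notin.
Qed.

Lemma has_length_mdim l : supported_at_m M -> has_length M l -> n = l.
Proof.
move=> supp [U [U0 [Ul [subU steps]]]].
suff rankU i : (i <= l)%N -> \rank (U i) = i.
  by rewrite -(mxrank1 k n) -(eqmx_rank Ul) rankU.
elim: i => [|i IHi] lt_il; first by rewrite U0 mxrank0.
have [ltU simpleU] := steps i lt_il.
have subUi := subU i (ltnW lt_il).
by rewrite (simple_quotient_mxrank supp subUi (subU i.+1 lt_il) ltU simpleU) IHi // ltnW.
Qed.

Lemma has_length_flag l (U : nat -> 'M[k]_n) :
  U 0%N = 0 -> (U l == 1%:M)%MS -> (forall i, (i <= l)%N -> is_submod (U i)) ->
  (forall i, (i < l)%N -> (U i <= U i.+1)%MS) ->
  (forall i, (i <= l)%N -> \rank (U i) = i) ->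
  has_length M l.
Proof.
move=> U0 Ul subU incrU rankU; exists U; split; [done | split; [done | split; [done |]]].
move=> i lt_il; have [ri ri1] := (rankU i (ltnW lt_il), rankU i.+1 lt_il).
split=> [|W _ UW WU]; first by rewrite ltmxErank ri ri1 incrU ?ltnSn.
by apply: (no_submx_between UW WU); rewrite ri ri1.
Qed.

End Length.

Section Homomorphisms.
Variable k : fieldType.
Implicit Types M N : kxy_mod k.

Definition is_mod_hom N M (Q : 'M[k]_(mdim N, mdim M)) : Prop :=
  actX N *m Q = Q *m actX M /\ actY N *m Q = Q *m actY M.

Lemma mod_iso_sym M N : mod_iso M N -> mod_iso N M.
Proof.
case=> P [/row_freeP[C PC] /row_fullP[B BP] PX PY].
have eqBC : B = C by rewrite -[B]mulmx1 -PC mulmxA BP mul1mx.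
subst B; have PV A1 A2 : A1 *m P = P *m A2 -> A2 *m C = C *m A1.
  move=> e; rewrite -[C *m A1]mulmx1 -PC !mulmxA -(mulmxA C) e.
  by rewrite mulmxA BP mul1mx.
exists C; split; [apply/row_freeP; exists P | apply/row_fullP; exists P | |];
  by [|exact: PV].
Qed.

Lemma mod_iso_of_hom N M (Q : 'M[k]_(mdim N, mdim M)) :
  mdim N = mdim M -> row_free Q -> is_mod_hom Q -> mod_iso M N.
Proof.
move=> eq_dim freeQ [QX QY]; apply: mod_iso_sym; exists Q; split=> //.
by move: freeQ; rewrite /row_free /row_full => /eqP ->; apply/eqP.
Qed.

Lemma is_mod_hom_dsum N1 N2 M (Q1 : 'M[k]_(mdim N1, mdim M))
    (Q2 : 'M[k]_(mdim N2, mdim M)) :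
  is_mod_hom Q1 -> is_mod_hom Q2 -> is_mod_hom (N := dsum N1 N2) (col_mx Q1 Q2).
Proof.
by move=> [X1 Y1] [X2 Y2]; split; rewrite /= mul_block_col mul_col_mx !mul0mx
  ?addr0 ?add0r ?X1 ?X2 ?Y1 ?Y2.
Qed.

Lemma is_mod_hom_k M (u : 'rV[k]_(mdim M)) :
  u *m actX M = 0 -> u *m actY M = 0 -> is_mod_hom (N := k_mod k) u.
Proof. by move=> uX uY; split; rewrite /= mul0mx ?uX ?uY. Qed.

End Homomorphisms.

Section DualAm2.
Variable k : fieldType.

Lemma trmx_delta_block (j : nat) : (j < 2)%N ->
  (delta_mx (inord 0) (inord j.+1) : 'M[k]_3)^T
  = block_mx (0 : 'M_1) 0 (col_mx (j == 0)%:R%:M (j == 1)%:R%:M) 0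
    :> 'M_(1 + (1 + 1)).
Proof.
move=> lt_j2; apply/matrixP => i l; rewrite trmx_delta -(splitK i) -(splitK l).
case: (split i) => [i'|i']; case: (split l) => l' /=;
  rewrite ?(block_mxEul, block_mxEur, block_mxEdl, block_mxEdr).
all: try (rewrite -(splitK i'); case: (split i') => i'' /=;
          rewrite ?(col_mxEu, col_mxEd)).
all: case: j lt_j2 => [|[|//]] _; by rewrite ?mxE -?(inj_eq val_inj) /= ?inordK // ?ord1.
Qed.

Lemma is_mod_hom_dual_Am2 M (w v1 v2 : 'rV[k]_(mdim M)) :
  w *m actX M = 0 -> w *m actY M = 0 -> v1 *m actX M = w -> v1 *m actY M = 0 ->
  v2 *m actX M = 0 -> v2 *m actY M = w ->
  is_mod_hom (N := dual_mod (Am2_mod k)) (col_mx w (col_mx v1 v2)).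
Proof.
move=> wX wY v1X v1Y v2X v2Y.
(* restated with Q : 'M_(1 + (1 + 1), _), so that the block product lemmas apply *)
have blockE j (Q : 'M[k]_(1 + (1 + 1), mdim M)) : (j < 2)%N ->
    (delta_mx (inord 0) (inord j.+1) : 'M_3)^T *m Q
    = block_mx (0 : 'M_1) 0 (col_mx (j == 0)%:R%:M (j == 1)%:R%:M) 0 *m Q.
  by move=> lt_j2; rewrite trmx_delta_block.
by split; rewrite !(mul_col_mx w (col_mx v1 v2)) !mul_col_mx /= /m2X /m2Y blockE //
  mul_block_col !mul_col_mx !mul0mx !addr0 !mul_scalar_mx /= ?scale1r ?scale0r
  ?wX ?wY ?v1X ?v1Y ?v2X ?v2Y.
Qed.

End DualAm2.

Section LengthTwoSubscheme.
Variable k : fieldType.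

(* For (a, b) <> 0, [oz_mod a b] is O_Z = A/(m^2, b x - a y) in the basis
   (socle generator, 1): both x and y kill the first vector and send the
   second one to a, resp. b, times the first. *)
Definition oz_act (a : k) : 'M[k]_(1 + 1) := block_mx 0 0 a%:M 0.

Lemma oz_act_mul a b : oz_act a *m oz_act b = 0.
Proof. by rewrite mulmx_block !mulmx0 !mul0mx !addr0 block_mx0. Qed.

Lemma oz_comm a b : oz_act a *m oz_act b = oz_act b *m oz_act a.
Proof. by rewrite !oz_act_mul. Qed.

Definition oz_mod (a b : k) : kxy_mod k := KxyMod (oz_comm a b).

Lemma is_mod_hom_oz M a b (w u : 'rV[k]_(mdim M)) :
  w *m actX M = 0 -> w *m actY M = 0 ->
  u *m actX M = a *: w -> u *m actY M = b *: w ->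
  is_mod_hom (N := oz_mod a b) (col_mx w u).
Proof.
by move=> wX wY uX uY; split; rewrite /= mul_block_col mul_col_mx !mul0mx !addr0
  mul_scalar_mx ?wX ?uX ?wY ?uY.
Qed.

Lemma oz_supported a b : supported_at_m (oz_mod a b).
Proof.
exists 2%N => -[|[|[|//]]] _ /=; rewrite ?expr0 ?mul1mx ?mulmx1 ?expr1 ?expr2 -?mulmxE;
  exact: oz_act_mul.
Qed.

Lemma oz_cyclic a b : (a != 0) || (b != 0) -> cyclic_mod (oz_mod a b).
Proof.
move=> ab0; exists (row_mx 0 1) => W /andP[/= WX WY] genW.
have genXY c : row_mx 0 1 *m oz_act c = c *: row_mx 1 0.
  by rewrite /oz_act mul_row_block !mulmx0 !mul1mx !add0r scale_row_mx scaler0 scalemx1.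
have socW : (row_mx 1 0 <= W)%MS.
  case/orP: ab0 => c0; rewrite -(eqmx_scale _ c0) -genXY.
  exact: submx_trans (submxMr _ genW) WX.
  exact: submx_trans (submxMr _ genW) WY.
by rewrite (scalar_mx_block 1 1) block_mxEv col_mx_sub socW genW.
Qed.

Lemma oz_length a b : has_length (oz_mod a b) 2.
Proof.
pose soc : 'M[k]_(1 + 1) := block_mx 1 0 0 0.
have socX c : soc *m oz_act c = 0.
  by rewrite /soc /oz_act mulmx_block !mulmx0 !mul0mx !addr0 block_mx0.
have rank_soc : \rank soc = 1%N by rewrite /soc -pid_mx_block rank_pid_mx.
apply: (@has_length_flag _ (oz_mod a b) 2
  (fun i => match i return 'M_(1 + 1) with 0 => 0 | 1 => soc | _ => 1%:M end)).
- by [].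
- by rewrite /= submx_refl.
- by case=> [|[|[|i]]] // _; rewrite /is_submod /= ?mul0mx ?socX ?sub0mx ?submx1.
- by case=> [|[|i]] // _; rewrite ?sub0mx ?submx1.
- by case=> [|[|[|i]]] // _; rewrite ?mxrank0 ?rank_soc ?mxrank1.
Qed.

End LengthTwoSubscheme.

Section Structure.
Variables (k : fieldType) (M : kxy_mod k).
Local Notation X := (actX M).
Local Notation Y := (actY M).
Local Notation n := (mdim M).

Definition actXY : 'M[k]_(n, n + n) := row_mx X Y.

Lemma kermx_actXYP (v : 'rV[k]_n) :
  reflect (v *m X = 0 /\ v *m Y = 0) (v <= kermx actXY)%MS.
Proof.
rewrite /actXY; apply: (iffP sub_kermxP); rewrite mul_mx_row -row_mx0.
  exact: eq_row_mx.
by case=> -> ->.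
Qed.

Lemma mM_generator : supported_at_m M -> \rank (X + Y)%MS = 1%N ->
  exists w : 'rV[k]_n,
    [/\ w != 0, (X <= w)%MS, (Y <= w)%MS, w *m X = 0 & w *m Y = 0].
Proof.
move=> /supported_nilpotent[N [XN0 YN0]] rank_mM.
set w := nz_row (X + Y)%MS.
have w0 : w != 0 by rewrite nz_row_eq0 -mxrank_eq0 rank_mM.
have mMw : ((X + Y)%MS <= w)%MS.
  have := (mxrank_leqif_eq (nz_row_sub (X + Y)%MS)).2.
  by rewrite rank_rV w0 rank_mM eqxx => /esym/andP[].
have [Xw Yw] : (X <= w)%MS /\ (Y <= w)%MS by apply/andP; rewrite -addsmx_sub.
exists w; split=> //.
  exact: nilpotent_stable_rV_eq0 XN0 (submx_trans (submxMl w X) Xw).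
exact: nilpotent_stable_rV_eq0 YN0 (submx_trans (submxMl w Y) Yw).
Qed.

Variable w : 'rV[k]_n.
Hypotheses (Xw : (X <= w)%MS) (Yw : (Y <= w)%MS).

Lemma actXY_sub_wrows : (actXY <= row_mx w 0 + row_mx 0 w)%MS.
Proof.
rewrite /actXY; have [[DX ->] [DY ->]] := (submxP Xw, submxP Yw).
have -> : row_mx (DX *m w) (DY *m w) = DX *m row_mx w 0 + DY *m row_mx 0 w.
  by rewrite !mul_mx_row !mulmx0 add_row_mx addr0 add0r.
exact: addmx_sub_adds (submxMl _ _) (submxMl _ _).
Qed.

Lemma mxrank_wrows_le2 : (\rank (row_mx w 0 + row_mx 0 w : 'M_(n + n)) <= 2)%N.
Proof.
apply: leq_trans (mxrank_adds_leqif _ _).1 _.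
exact: leq_add (rank_leq_row _) (rank_leq_row _).
Qed.

Lemma mxrank_actXY_le2 : (\rank actXY <= 2)%N.
Proof. exact: leq_trans (mxrankS actXY_sub_wrows) mxrank_wrows_le2. Qed.

Hypotheses (wX : w *m X = 0) (wY : w *m Y = 0).

Lemma w_sub_kermx : (w <= kermx actXY)%MS.
Proof. exact/kermx_actXYP. Qed.

Hypotheses (w0 : w != 0) (n4 : n = 4%N).

Lemma iso_k_dual_Am2 :
  \rank actXY = 2%N -> mod_iso M (dsum (k_mod k) (dual_mod (Am2_mod k))).
Proof.
move=> rank2.
have eq_wrows : (actXY == row_mx w 0 + row_mx 0 w)%MS.
  rewrite -(mxrank_leqif_eq actXY_sub_wrows).2 eqn_leq mxrankS ?actXY_sub_wrows //.
  by rewrite rank2 mxrank_wrows_le2.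
have /andP[_ wrows_sub] := eq_wrows.
have [D2 eD2] := submxP (submx_trans (addsmxSl _ _) wrows_sub).
have [D3 eD3] := submxP (submx_trans (addsmxSr _ _) wrows_sub).
have [D2X D2Y] : D2 *m X = w /\ D2 *m Y = 0.
  by move: eD2; rewrite /actXY mul_mx_row => /esym/eq_row_mx.
have [D3X D3Y] : D3 *m X = 0 /\ D3 *m Y = w.
  by move: eD3; rewrite /actXY mul_mx_row => /esym/eq_row_mx.
have [u0 u0_ker u0_notin] :
    exists2 u0 : 'rV_n, (u0 <= kermx actXY)%MS & ~~ (u0 <= w)%MS.
  by apply: row_notin_of_mxrank_lt; rewrite mxrank_ker rank2 rank_rV w0 n4.
have /kermx_actXYP[u0X u0Y] := u0_ker.
apply: (@mod_iso_of_hom _ (dsum (k_mod k) (dual_mod (Am2_mod k))) M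
  (col_mx u0 (col_mx w (col_mx D2 D3)))).
- by rewrite n4.
- rewrite /row_free (col_mx_eqmx_adds (eqmx_refl u0)
    (col_mx_eqmx_adds (eqmx_refl w) (eqmx_sym (addsmxE D2 D3)))) addsmxA.
  have Kker : (u0 + w <= kermx actXY)%MS by rewrite addsmx_sub u0_ker w_sub_kermx.
  have := mxrank_adds_kermx (D2 + D3)%MS Kker.
  rewrite addsmxMr -eD2 -eD3 mxrank_adds_notin // rank_rV w0.
  rewrite -(eqmx_rank eq_wrows) rank2 /=.
  have := rank_leq_col (u0 + w + (D2 + D3))%MS.
  change (mdim (dsum _ _)) with 4%N; lia.
- apply: is_mod_hom_dsum; first exact: is_mod_hom_k.
  exact: is_mod_hom_dual_Am2.
Qed.

Lemma iso_k2_oz : \rank actXY = 1%N ->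
  exists OZ : kxy_mod k,
    [/\ cyclic_mod OZ, supported_at_m OZ, has_length OZ 2 &
         mod_iso M (dsum (dsum (k_mod k) (k_mod k)) OZ)].
Proof.
move=> rank1.
have rank_ker : \rank (kermx actXY) = 3%N by rewrite mxrank_ker rank1 n4.
have [u _ u_notin] : exists2 u : 'rV_n, (u <= 1%:M)%MS & ~~ (u <= kermx actXY)%MS.
  by apply: row_notin_of_mxrank_lt; rewrite rank_ker mxrank1 n4.
have [[a uX] [b uY]] := (sub_rVP (submx_trans (submxMl u X) Xw),
                         sub_rVP (submx_trans (submxMl u Y) Yw)).
have ab0 : (a != 0) || (b != 0).
  apply: contraR u_notin; rewrite negb_or !negbK => /andP[/eqP a0 /eqP b0].
  by apply/kermx_actXYP; rewrite uX uY a0 b0 !scale0r.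
have [u0 u0_ker u0_notin] :
    exists2 u0 : 'rV_n, (u0 <= kermx actXY)%MS & ~~ (u0 <= w)%MS.
  by apply: row_notin_of_mxrank_lt; rewrite rank_ker rank_rV w0.
have [u1 u1_ker u1_notin] :
    exists2 u1 : 'rV_n, (u1 <= kermx actXY)%MS & ~~ (u1 <= u0 + w)%MS.
  by apply: row_notin_of_mxrank_lt; rewrite rank_ker mxrank_adds_notin // rank_rV w0.
have [/kermx_actXYP[u0X u0Y] /kermx_actXYP[u1X u1Y]] := (u0_ker, u1_ker).
exists (oz_mod a b); split; [exact: oz_cyclic | exact: oz_supported | exact: oz_length |].
apply: (@mod_iso_of_hom _ (dsum (dsum (k_mod k) (k_mod k)) (oz_mod a b)) M
  (col_mx (col_mx u0 u1) (col_mx w u))).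
- by rewrite n4.
- rewrite /row_free.
  rewrite (col_mx_eqmx_adds (eqmx_sym (addsmxE u0 u1)) (eqmx_sym (addsmxE w u))).
  rewrite addsmxA (addsmxC u0 u1) -(addsmxA u1).
  have Kker : (u1 + (u0 + w) <= kermx actXY)%MS.
    by rewrite !addsmx_sub u1_ker u0_ker w_sub_kermx.
  have := mxrank_adds_kermx u Kker.
  have uR0 : u *m actXY != 0 by apply: contra u_notin => /eqP/sub_kermxP.
  rewrite !mxrank_adds_notin // rank_rV w0 rank_rV uR0 /=.
  have := rank_leq_col (u1 + (u0 + w) + u)%MS.
  change (mdim (dsum _ _)) with 4%N; lia.
- apply: is_mod_hom_dsum; first by apply: is_mod_hom_dsum; exact: is_mod_hom_k.
  exact: is_mod_hom_oz.
Qed.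

End Structure.

Unset Implicit Arguments. Set Strict Implicit.

Theorem proposition5p1 (k : closedFieldType) (hk : [pchar k] =i pred0)
  (M : kxy_mod k) :
  supported_at_m M -> has_length M 4 -> top_dim M = 3%N ->
  mod_iso M (dsum (k_mod k) (dual_mod (Am2_mod k)))
  \/ exists OZ : kxy_mod k,
       [/\ cyclic_mod OZ, supported_at_m OZ, has_length OZ 2 &
           mod_iso M (dsum (dsum (k_mod k) (k_mod k)) OZ)].
Proof.
move=> supp len4 top3.
have n4 := has_length_mdim supp len4.
have rank_mM : \rank (actX M + actY M)%MS = 1%N.
  by move: top3; rewrite /top_dim; have := rank_leq_col (actX M + actY M)%MS; lia.
have [w [w0 Xw Yw wX wY]] := mM_generator supp rank_mM.
have actXY_neq0 : \rank (actXY M) != 0%N.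
  rewrite mxrank_eq0 /actXY -row_mx0; apply/eqP => /eq_row_mx[X0 Y0].
  by move: rank_mM; rewrite X0 Y0 adds0mx mxrank0.
have [rank1 | rank2] : \rank (actXY M) = 1%N \/ \rank (actXY M) = 2%N.
  by have := mxrank_actXY_le2 Xw Yw; lia.
- by right; exact: iso_k2_oz Xw Yw wX wY w0 n4 rank1.
- by left; exact: iso_k_dual_Am2 Xw Yw wX wY w0 n4 rank2.
Qed.
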